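(* Let $P$ be a three-dimensional zonotope which is not a prism, and let $E$ be an edge of $P$ with $\#B(E)=10$. Then there exists an edge $M$ of $P$ not parallel to $E$ with $\#B(M)\ge 8$.
   Context: A zonotope is a Minkowski sum of finitely many segments. For an edge $E$ of a three-dimensional zonotope $P$, the belt $B(E)$ is the set of facets of $P$ containing a translate of $E$ as an edge, and $\#B(E)$ is the number of facets in it. A prism (cylinder) is a set $Q+S$ with $Q$ a convex polygon and $S$ a segment not parallel to the plane of $Q$. *)

From HB Require Import structures.
From mathcomp Require Import all_boot all_order all_algebra.
From mathcomp Require Import reals.
Set Implicit Arguments. Unset Strict Implicit. Unset Printing Implicit Defensive.
Import Order.TTheory GRing.Theory Num.Theory.
Local Open Scope ring_scope.

Section Zono.
Variable R : realType.
Local Notation V := 'rV[R]_3.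

Definition dot (u x : V) : R := \sum_(i < 3) u ord0 i * x ord0 i.

Definition seteq (A B : V -> Prop) : Prop := forall x, A x <-> B x.

Definition segment (a b : V) : V -> Prop :=
  fun x => exists t : R, 0 <= t <= 1 /\ x = a + t *: (b - a).

Definition minkowski (A B : V -> Prop) : V -> Prop :=
  fun x => exists y z, A y /\ B z /\ x = y + z.

Definition conv (n : nat) (p : 'I_n -> V) : V -> Prop :=
  fun x => exists l : 'I_n -> R, (forall i, 0 <= l i) /\
    \sum_(i < n) l i = 1 /\ x = \sum_(i < n) l i *: p i.

(* zonotope: Minkowski sum of finitely many segments [a_i, b_i] *)
Definition zonotope (P : V -> Prop) : Prop :=
  exists (n : nat) (a b : 'I_n -> V), forall x, P x <->
    exists t : 'I_n -> R, (forall i, 0 <= t i <= 1) /\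
      x = \sum_(i < n) (a i + t i *: (b i - a i)).

Definition full_dim (P : V -> Prop) : Prop :=
  forall (u : V) (c : R), u != 0 -> ~ (forall x, P x -> dot u x = c).

Definition not_in_line (F : V -> Prop) : Prop :=
  ~ exists a d : V, forall x, F x -> exists t : R, x = a + t *: d.

Definition face_of (S : V -> Prop) (u : V) : V -> Prop :=
  fun x => S x /\ forall y, S y -> dot u y <= dot u x.

Definition is_face (S F : V -> Prop) : Prop := exists u, seteq F (face_of S u).

Definition is_edge (S E : V -> Prop) : Prop :=
  is_face S E /\ exists a b : V, a != b /\ seteq E (segment a b).

(* facet of a 3-dimensional polytope: a proper face not contained in a line *)
Definition is_facet (P F : V -> Prop) : Prop :=
  (exists u : V, u != 0 /\ seteq F (face_of P u)) /\ not_in_line F.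

Definition translate (E : V -> Prop) (t : V) : V -> Prop := fun x => E (x - t).

Definition in_belt (P E F : V -> Prop) : Prop :=
  is_facet P F /\ exists t : V, is_edge F (translate E t).

Definition card_eq (A : (V -> Prop) -> Prop) (n : nat) : Prop :=
  exists f : 'I_n -> (V -> Prop),
    (forall i, A (f i)) /\ (forall i j, seteq (f i) (f j) -> i = j) /\
    (forall F, A F -> exists i, seteq (f i) F).

Definition card_ge (A : (V -> Prop) -> Prop) (n : nat) : Prop :=
  exists f : 'I_n -> (V -> Prop),
    (forall i, A (f i)) /\ (forall i j, seteq (f i) (f j) -> i = j).

Definition parallel (E M : V -> Prop) : Prop :=
  exists a b c d : V, seteq E (segment a b) /\ seteq M (segment c d) /\
    exists k : R, d - c = k *: (b - a).

Definition polygon (Q : V -> Prop) : Prop :=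
  (exists (n : nat) (p : 'I_n -> V), seteq Q (conv p)) /\
  (exists (u : V) (c : R), u != 0 /\ forall x, Q x -> dot u x = c) /\
  not_in_line Q.

Definition prism (P : V -> Prop) : Prop :=
  exists (Q : V -> Prop) (a b : V), polygon Q /\
    seteq P (minkowski Q (segment a b)) /\
    forall (u : V) (c : R), u != 0 -> (forall x, Q x -> dot u x = c) ->
      dot u (b - a) != 0.

End Zono.

From mathcomp Require Import all_boot all_order all_algebra.
From mathcomp Require Import reals.
From mathcomp Require Import ring lra.
Set Implicit Arguments. Unset Strict Implicit. Unset Printing Implicit Defensive.
Import Order.TTheory GRing.Theory Num.Theory.

(* Write P = c + sum_i [0, g_i].  The facets in the belt of an edge along a generator d come in
   opposite pairs, one pair for each plane spanned by d and another generator; hence #B(E) = 10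
   yields five generators a_0, ..., a_4 spanning pairwise distinct planes with d.  Conversely,
   an edge along a generator k whose planes with four generators are pairwise distinct has at
   least 8 facets in its belt.  If the a_p are coplanar, a generator k outside their plane and
   not parallel to d exists because P is not a prism, and k works with a_0, ..., a_4.
   Otherwise a finite check over the coplanarity patterns of five vectors gives an a_i such
   that d and three other a_p span pairwise distinct planes with k = a_i. *)

(** * Finite combinatorics *)

Lemma exists_pairwise_unrelated (T : finType) (r : rel T) (m : nat) :
  equivalence_rel r -> (forall x, #|[pred y | r x y]| <= 2) -> 2 * m <= #|T| ->
  exists f : 'I_m -> T, forall p q, p != q -> ~~ r (f p) (f q).
Proof.
move=> req class2 mT.
have eqiD : {in [set: T] & &, equivalence_rel r} by move=> x y z _ _ _; exact: req.
pose Pr := equivalence_partition r [set: T].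
have partP := equivalence_partitionP eqiD.
have trX := transversalP partP; set X := transversal Pr [set: T] in trX.
have block_r : forall x, pblock Pr x = [set y | r x y].
  move=> x; apply/setP => y; rewrite inE.
  by rewrite (pblock_equivalence_partition eqiD) ?inE.
have mX : m <= #|X|.
  rewrite (card_transversal trX) -(leq_pmul2l (isT : 0 < 2)).
  apply: (leq_trans mT); rewrite -cardsT (card_partition partP) mulnC -sum_nat_const.
  apply: leq_sum => B PB; have [x _ ->] := imsetP PB.
  by apply: leq_trans (class2 x); apply: subset_leq_card; apply/subsetP => y; rewrite !inE.
exists (fun p => enum_val (widen_ord mX p)) => p q; apply: contra => hr.
have /enum_val_inj/(congr1 val)/= epq : enum_val (widen_ord mX p) = enum_val (widen_ord mX q).
  apply: (pblock_inj trX); rewrite ?enum_valP // !block_r.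
  have [_ rtr] := (equivalence_relP r).1 req.
  by apply/setP => y; rewrite !inE (rtr _ _ hr).
by apply/eqP/val_inj.
Qed.

(* On triples of distinct points, a symmetric ternary relation on {0,..,4} is determined by its
   values on the ten increasing triples of [triples5], ranked by [triple_rank]; [sym3_of b]
   decodes such a table [b]. *)
Definition triples5 : seq (nat * nat * nat) :=
  [:: (0, 1, 2); (0, 1, 3); (0, 1, 4); (0, 2, 3); (0, 2, 4);
      (0, 3, 4); (1, 2, 3); (1, 2, 4); (1, 3, 4); (2, 3, 4)].

Definition triple_rank (t : nat * nat * nat) : nat :=
  match t with
  | (0, 1, 2) => 0 | (0, 1, 3) => 1 | (0, 1, 4) => 2 | (0, 2, 3) => 3 | (0, 2, 4) => 4
  | (0, 3, 4) => 5 | (1, 2, 3) => 6 | (1, 2, 4) => 7 | (1, 3, 4) => 8 | (2, 3, 4) => 9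
  | _ => 10
  end.

Definition sort3 (p q r : nat) : nat * nat * nat :=
  let lo := minn p (minn q r) in let hi := maxn p (maxn q r) in (lo, p + q + r - lo - hi, hi).

Definition sym3_of (b : seq bool) (p q r : nat) : bool :=
  nth false b (triple_rank (sort3 p q r)).

Section FivePointPredicates.
Variable Z : nat -> nat -> nat -> bool.
Let I5 := iota 0 5.

Definition exchange5 : bool :=
  all (fun p => all (fun q => all (fun r => all (fun s =>
    uniq [:: p; q; r; s] ==> Z p q r ==> Z p q s ==> Z p r s) I5) I5) I5) I5.

Definition one_block5 : bool :=
  has (fun i => has (fun j =>
    (i != j) && all (fun p => (p != i) ==> (p != j) ==> Z i j p) I5) I5) I5.

Definition three_apart5 : bool :=
  has (fun i => has (fun x => has (fun y => has (fun w =>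
    [&& uniq [:: i; x; y; w], ~~ Z i x y, ~~ Z i x w & ~~ Z i y w]) I5) I5) I5) I5.

End FivePointPredicates.

Fixpoint bool_seqs (n : nat) : seq (seq bool) :=
  if n is n'.+1 then [seq x :: s | x <- [:: true; false], s <- bool_seqs n'] else [:: [::]].

Lemma mem_bool_seqs (s : seq bool) : s \in bool_seqs (size s).
Proof.
elim: s => [|x s IH] //=; rewrite mem_cat.
by case: x; apply/orP; [left | right; rewrite mem_cat orbF]; apply: map_f.
Qed.

Lemma five_points_check :
  all (fun b => exchange5 (sym3_of b) ==> one_block5 (sym3_of b) || three_apart5 (sym3_of b))
      (bool_seqs 10).
Proof. by vm_compute. Qed.

Section FivePoints.
Variable Z : 'I_5 -> 'I_5 -> 'I_5 -> bool.
Hypothesis Z_sym12 : forall p q r, Z p q r = Z q p r.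
Hypothesis Z_sym23 : forall p q r, Z p q r = Z p r q.
Hypothesis Z_exchange :
  forall p q r s, uniq [:: p; q; r; s] -> Z p q r -> Z p q s -> Z p r s.

Let Zn (p q r : nat) := Z (inord p) (inord q) (inord r).
Let b := [seq Zn t.1.1 t.1.2 t.2 | t <- triples5].

Let sym3_of_b p q r : p < 5 -> q < 5 -> r < 5 -> uniq [:: p; q; r] ->
  sym3_of b p q r = Zn p q r.
Proof.
have s12 x y z : Zn x y z = Zn y x z by apply: Z_sym12.
have s23 x y z : Zn x y z = Zn x z y by apply: Z_sym23.
move: p q r => [|[|[|[|[|p]]]]] [|[|[|[|[|q]]]]] [|[|[|[|[|r]]]]] //= _ _ _ _;
  rewrite /sym3_of /=; first [ done | by rewrite [LHS]s12 | by rewrite [LHS]s23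
  | by rewrite [LHS]s12 [LHS]s23 | by rewrite [LHS]s23 [LHS]s12
  | by rewrite [LHS]s12 [LHS]s23 [LHS]s12 ].
Qed.

Let uniq_inord (s : seq nat) : all (fun p => p < 5) s ->
  uniq [seq inord p : 'I_5 | p <- s] = uniq s.
Proof.
move=> /allP s5; apply: map_inj_in_uniq => p q /s5 hp /s5 hq.
by move/(congr1 val); rewrite /= !inordK.
Qed.

Let in5 := mem_iota 0 5.

Let inord_eq (i : nat) (p : 'I_5) : i < 5 -> (inord i == p) = (i == p).
Proof. by move=> i5; rewrite -(inj_eq val_inj) /= inordK. Qed.

(* With [Z p q r] read as "a_p, a_q, a_r are coplanar": either all five vectors lie in the plane
   of two of them, or some a_i sees three others in pairwise distinct planes through a_i. *)
Lemma five_points :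
  (exists i j, i != j /\ forall p, p != i -> p != j -> Z i j p) \/
  (exists i x y w, uniq [:: i; x; y; w] /\ [/\ ~~ Z i x y, ~~ Z i x w & ~~ Z i y w]).
Proof.
have /implyP := allP five_points_check b (mem_bool_seqs b).
have -> : exchange5 (sym3_of b).
  apply/allP => p /[!in5] /andP[_ p5]; apply/allP => q /[!in5] /andP[_ q5].
  apply/allP => r /[!in5] /andP[_ r5]; apply/allP => s /[!in5] /andP[_ s5].
  apply/implyP => upqrs; have := upqrs; rewrite /= !inE !negb_or.
  case/and4P => /and3P[pq pr ps] /andP[qr qs] rs _.
  rewrite !sym3_of_b //= ?inE ?negb_or ?pq ?pr ?ps ?qr ?qs ?rs //.
  apply/implyP => Zpqr; apply/implyP; apply: Z_exchange Zpqr.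
  by rewrite -[[:: _; _; _; _]]/(map _ [:: p; q; r; s]) uniq_inord //= p5 q5 r5 s5.
case/(_ isT)/orP => [/hasP[i /[!in5] /andP[_ i5]] /hasP[j /[!in5] /andP[_ j5]]|].
  case/andP => ij /allP hij; left; exists (inord i), (inord j); split.
    by rewrite inord_eq // inordK.
  move=> p pi pj.
  have ip : i != p by rewrite -inord_eq // eq_sym.
  have jp : j != p by rewrite -inord_eq // eq_sym.
  have := hij p; rewrite in5 /= ltn_ord !(eq_sym (val p)) ip jp => /(_ isT).
  by rewrite sym3_of_b //= ?inE ?negb_or ?ij ?ip ?jp // /Zn inord_val.
case/hasP => i /[!in5] /andP[_ i5] /hasP[x /[!in5] /andP[_ x5]].
case/hasP => y /[!in5] /andP[_ y5] /hasP[w /[!in5] /andP[_ w5]].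
case/and4P => uixyw; have := uixyw; rewrite /= !inE !negb_or.
case/and4P => /and3P[ix iy iw] /andP[xy xw] yw _.
rewrite !sym3_of_b //= ?inE ?negb_or ?ix ?iy ?iw ?xy ?xw ?yw // => Zixy Zixw Ziyw.
right; exists (inord i), (inord x), (inord y), (inord w); split; last by split.
by have := @uniq_inord [:: i; x; y; w]; rewrite /= i5 x5 y5 w5 => /(_ isT) ->.
Qed.

End FivePoints.

Section ProductWeights.
Variables (R : comPzRingType) (I : finType) (t : I -> R).
Local Open Scope ring_scope.

Let weight (f : {ffun I -> bool}) : R := \prod_i (if f i then t i else 1 - t i).

Lemma sum_prod_weights : \sum_f weight f = 1.
Proof.
rewrite /weight -(bigA_distr_bigA (fun i (bb : bool) => if bb then t i else 1 - t i)) /=.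
by apply: big1 => i _; rewrite big_bool /= addrC subrK.
Qed.

Lemma sum_prod_weights_at j : \sum_f weight f * (f j)%:R = t j.
Proof.
pose G i (bb : bool) := if i == j then (if bb then t i else 0) else if bb then t i else 1 - t i.
have -> : \sum_f weight f * (f j)%:R = \sum_(f : {ffun I -> bool}) \prod_i G i (f i).
  apply: eq_bigr => f _; rewrite /weight (bigD1 j) //= [in RHS](bigD1 j) //= /G eqxx.
  rewrite mulrAC; congr (_ * _); last by apply: eq_bigr => i /negbTE ->.
  by case: (f j); rewrite ?mulr1 ?mulr0.
rewrite -(bigA_distr_bigA G) /= (bigD1 j) //= big_bool /G eqxx /= addr0.
by rewrite big1 ?mulr1 // => i /negbTE ij; rewrite big_bool ij /= addrC subrK.
Qed.

End ProductWeights.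

(** * Vector algebra in R^3 *)

Section Space3.
Local Open Scope ring_scope.
Variable R : realType.
Local Notation V := 'rV[R]_3.
Implicit Types (a b d u v w x y z : V).

Definition coord3 (j : 'I_3) v : R := v ord0 j.

Lemma coord3D j u v : coord3 j (u + v) = coord3 j u + coord3 j v.
Proof. by rewrite /coord3 mxE. Qed.
Lemma coord3N j v : coord3 j (- v) = - coord3 j v.
Proof. by rewrite /coord3 mxE. Qed.
Lemma coord3B j u v : coord3 j (u - v) = coord3 j u - coord3 j v.
Proof. by rewrite coord3D coord3N. Qed.
Lemma coord3Z j (s : R) v : coord3 j (s *: v) = s * coord3 j v.
Proof. by rewrite /coord3 mxE. Qed.
Lemma coord3_0 j : coord3 j 0 = 0.
Proof. by rewrite /coord3 mxE. Qed.

Lemma rv3P u v :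
  u = v <-> [/\ coord3 0 u = coord3 0 v, coord3 1 u = coord3 1 v & coord3 2 u = coord3 2 v].
Proof.
split=> [-> //|[e0 e1 e2]]; apply/rowP => i.
have: [|| i == 0, i == 1 | i == 2] by case: i => [[|[|[|]]]].
by case/or3P => /eqP ->.
Qed.

Lemma dotE u v :
  dot u v = coord3 0 u * coord3 0 v + coord3 1 u * coord3 1 v + coord3 2 u * coord3 2 v.
Proof.
rewrite /dot !big_ord_recr big_ord0 /= add0r.
by congr (_ * _ + _ * _ + _ * _); congr (_ _ _); apply/val_inj.
Qed.

Definition cross u v : V := \row_(j < 3)
  (if j == 0 then coord3 1 u * coord3 2 v - coord3 2 u * coord3 1 v
   else if j == 1 then coord3 2 u * coord3 0 v - coord3 0 u * coord3 2 v
   else coord3 0 u * coord3 1 v - coord3 1 u * coord3 0 v).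

Lemma cross0E u v : coord3 0 (cross u v) = coord3 1 u * coord3 2 v - coord3 2 u * coord3 1 v.
Proof. by rewrite {1}/coord3 mxE. Qed.
Lemma cross1E u v : coord3 1 (cross u v) = coord3 2 u * coord3 0 v - coord3 0 u * coord3 2 v.
Proof. by rewrite {1}/coord3 mxE. Qed.
Lemma cross2E u v : coord3 2 (cross u v) = coord3 0 u * coord3 1 v - coord3 1 u * coord3 0 v.
Proof. by rewrite {1}/coord3 mxE. Qed.

Definition det3 u v w : R := dot u (cross v w).

Ltac coord3_simpl := do 3 rewrite ?/det3 ?dotE ?cross0E ?cross1E ?cross2E
  ?coord3D ?coord3B ?coord3N ?coord3Z ?coord3_0.
Ltac coord3_ring := coord3_simpl; ring.
Ltac rv3_ring := apply/rv3P; coord3_simpl; split; ring.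

Lemma dotD u v w : dot u (v + w) = dot u v + dot u w. Proof. coord3_ring. Qed.
Lemma dotDl u v w : dot (u + v) w = dot u w + dot v w. Proof. coord3_ring. Qed.
Lemma dotZ u (s : R) v : dot u (s *: v) = s * dot u v. Proof. coord3_ring. Qed.
Lemma dotZl (s : R) u v : dot (s *: u) v = s * dot u v. Proof. coord3_ring. Qed.
Lemma dotNl u v : dot (- u) v = - dot u v. Proof. coord3_ring. Qed.
Lemma dot0 u : dot u 0 = 0. Proof. coord3_ring. Qed.
Lemma dotC u v : dot u v = dot v u. Proof. coord3_ring. Qed.

Lemma dot_sum u (I : finType) (P : pred I) (F : I -> V) :
  dot u (\sum_(i | P i) F i) = \sum_(i | P i) dot u (F i).
Proof. exact: (big_morph (dot u) (dotD u) (dot0 u)). Qed.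

Lemma dotvv_gt0 v : v != 0 -> 0 < dot v v.
Proof.
move=> v0; rewrite lt_def; apply/andP; split; last first.
  by rewrite dotE -!expr2 !addr_ge0 ?sqr_ge0.
apply: contra v0 => /eqP; rewrite dotE -!expr2 => v2; apply/eqP/rv3P; rewrite !coord3_0.
have h0 := sqr_ge0 (coord3 0 v); have h1 := sqr_ge0 (coord3 1 v); have h2 := sqr_ge0 (coord3 2 v).
by split; apply/eqP; rewrite -sqrf_eq0; apply/eqP; lra.
Qed.

Lemma crossC u v : cross u v = - cross v u. Proof. rv3_ring. Qed.
Lemma crossZl (s : R) u v : cross (s *: u) v = s *: cross u v. Proof. rv3_ring. Qed.
Lemma crossZr (s : R) u v : cross u (s *: v) = s *: cross u v. Proof. rv3_ring. Qed.
Lemma crossZZ (s t : R) v : cross (s *: v) (t *: v) = 0. Proof. rv3_ring. Qed.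
Lemma cross0l v : cross 0 v = 0. Proof. rv3_ring. Qed.
Lemma cross0r v : cross v 0 = 0. Proof. rv3_ring. Qed.
Lemma cross_crossl a b v : cross (cross a b) v = dot a v *: b - dot b v *: a.
Proof. rv3_ring. Qed.
Lemma cross_crossr a b c : cross a (cross b c) = dot a c *: b - dot a b *: c.
Proof. rv3_ring. Qed.
Lemma cross_cross_shared a b c : cross (cross a b) (cross a c) = det3 a b c *: a.
Proof. rv3_ring. Qed.
Lemma det3_expand d u v w :
  det3 u v w *: d = dot d u *: cross v w + dot d v *: cross w u + dot d w *: cross u v.
Proof. rv3_ring. Qed.

Lemma det3E u v w : det3 u v w = dot (cross u v) w. Proof. coord3_ring. Qed.
Lemma det3_cycle u v w : det3 u v w = det3 v w u. Proof. coord3_ring. Qed.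
Lemma det3_swap12 u v w : det3 u v w = - det3 v u w. Proof. coord3_ring. Qed.
Lemma det3_swap23 u v w : det3 u v w = - det3 u w v. Proof. coord3_ring. Qed.
Lemma det3_xyx u v : det3 u v u = 0. Proof. coord3_ring. Qed.
Lemma det3_xyy u v : det3 u v v = 0. Proof. coord3_ring. Qed.
Lemma dot_crossl u v : dot (cross u v) u = 0. Proof. coord3_ring. Qed.
Lemma dot_crossr u v : dot (cross u v) v = 0. Proof. coord3_ring. Qed.

Lemma det3_cross23_eq0 u v w : cross v w = 0 -> det3 u v w = 0.
Proof. by rewrite /det3 => ->; rewrite dot0. Qed.

Lemma det3_cross12_eq0 u v w : cross u v = 0 -> det3 u v w = 0.
Proof. by rewrite det3E => ->; coord3_ring. Qed.

Lemma cross_eq0_scale v d : d != 0 -> cross v d = 0 -> v = (dot v d / dot d d) *: d.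
Proof.
move=> d0 vd; have dd0 : dot d d != 0 by rewrite gt_eqF ?dotvv_gt0.
have e : dot d d *: v = dot d v *: d.
  by apply/eqP; rewrite -subr_eq0 -cross_crossr vd cross0r.
by apply: (scalerI dd0); rewrite e scalerA dotC mulrCA divff ?mulr1.
Qed.

Lemma orthogonal2_scale a b v : cross a b != 0 -> dot v a = 0 -> dot v b = 0 ->
  v = (dot v (cross a b) / dot (cross a b) (cross a b)) *: cross a b.
Proof.
move=> ab va vb; apply: cross_eq0_scale => //.
by rewrite crossC cross_crossl dotC va dotC vb !scale0r subrr oppr0.
Qed.

Lemma det3_orthogonal d u v w : d != 0 -> dot d u = 0 -> dot d v = 0 -> dot d w = 0 ->
  det3 u v w = 0.
Proof.
move=> d0 du dv dw; have := det3_expand d u v w.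
rewrite du dv dw !scale0r !addr0 => /eqP; rewrite scaler_eq0 (negbTE d0) orbF.
by move/eqP.
Qed.

Lemma det3_exchange a b c e : cross a b != 0 -> det3 a b c = 0 -> det3 a b e = 0 ->
  det3 a c e = 0.
Proof.
move=> ab abc abe; apply: (det3_orthogonal ab); first exact: dot_crossl.
  by rewrite -det3E.
by rewrite -det3E.
Qed.

Lemma plane_normals_parallel d x x' u u' : cross d x != 0 -> cross d x' != 0 ->
  det3 d x x' = 0 -> u != 0 -> dot u d = 0 -> dot u x = 0 -> dot u' d = 0 -> dot u' x' = 0 ->
  exists mu, u' = mu *: u.
Proof.
move=> dx dx' dxx' u0 ud ux u'd u'x'; exists (dot u' u / dot u u); apply: cross_eq0_scale => //.
rewrite (orthogonal2_scale dx ud ux) (orthogonal2_scale dx' u'd u'x').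
by rewrite crossZl crossZr cross_cross_shared det3_swap23 dxx' oppr0 !scale0r !scaler0.
Qed.

Lemma det3_same_plane a b u v h : cross a b != 0 -> cross u v != 0 ->
  det3 a b u = 0 -> det3 a b v = 0 -> det3 h u v = 0 -> det3 a b h = 0.
Proof.
move=> ab uv abu abv huv.
have nu : dot (cross a b) u = 0 by rewrite -det3E.
have nv : dot (cross a b) v = 0 by rewrite -det3E.
rewrite det3E; have [mu ->] : exists mu, cross a b = mu *: cross u v.
  by eexists; apply: orthogonal2_scale.
by rewrite dotZl -det3E -det3_cycle huv mulr0.
Qed.

Lemma seteq_sym (A B : V -> Prop) : seteq A B -> seteq B A.
Proof. by move=> AB x; split => /AB. Qed.

Lemma seteq_trans (A B C : V -> Prop) : seteq A B -> seteq B C -> seteq A C.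
Proof. by move=> AB BC x; split => [/AB/BC|/BC/AB]. Qed.

Lemma face_of_ext (A B : V -> Prop) u : seteq A B -> seteq (face_of A u) (face_of B u).
Proof.
by move=> AB x; split; case=> /AB Bx xmax; split=> // y /AB; apply: xmax.
Qed.

Lemma face_of_scale (A : V -> Prop) u (s : R) : 0 < s ->
  seteq (face_of A (s *: u)) (face_of A u).
Proof.
by move=> s0 x; split; case=> Ax xmax; split=> // y /xmax; rewrite !dotZl ler_pM2l.
Qed.

Lemma face_of_dot_eq (A : V -> Prop) u x y : face_of A u x -> face_of A u y ->
  dot u x = dot u y.
Proof. by case=> Ax xmax [Ay ymax]; apply/eqP; rewrite eq_le xmax // ymax. Qed.

Lemma translate_ext (A B : V -> Prop) t : seteq A B -> seteq (translate A t) (translate B t).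
Proof. by move=> AB x; apply: AB. Qed.

Lemma translate_segment a b t : seteq (translate (segment a b) t) (segment (a + t) (b + t)).
Proof.
move=> x; rewrite /translate; split; case=> s [s01 e]; exists s; split => //.
  by rewrite -[x](subrK t) e; rv3_ring.
by rewrite e; rv3_ring.
Qed.

Lemma segment_l a b : segment a b a.
Proof. by exists 0; rewrite lexx ler01 scale0r addr0. Qed.

Lemma segment_r a b : segment a b b.
Proof. by exists 1; rewrite lexx ler01 scale1r addrC subrK. Qed.

Lemma segment_sub a b x y : segment a b x -> segment a b y -> exists s, x - y = s *: (b - a).
Proof. by case=> s [_ ->] [s' [_ ->]]; exists (s - s'); rv3_ring. Qed.

Lemma not_in_line_ext (F G : V -> Prop) : seteq F G -> not_in_line F -> not_in_line G.
Proof. by move=> FG nlF [a [d Gline]]; apply: nlF; exists a, d => x /FG; apply: Gline. Qed.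

Lemma in_line_cross (F : V -> Prop) y k v :
  (exists a d, forall x, F x -> exists s : R, x = a + s *: d) ->
  F y -> F (y + k) -> F (y + v) -> cross k v = 0.
Proof.
case=> a [d Fline] /Fline[s1 e1] /Fline[s2 e2] /Fline[s3 e3].
have -> : k = (s2 - s1) *: d by rewrite -[k](addKr y) e2 e1; rv3_ring.
have -> : v = (s3 - s1) *: d by rewrite -[v](addKr y) e3 e1; rv3_ring.
exact: crossZZ.
Qed.

Lemma parallel_cross (E M : V -> Prop) d y v : parallel E M ->
  (forall x x', E x -> E x' -> cross (x - x') d = 0) -> M y -> M (y + v) -> cross v d = 0.
Proof.
case=> [a [b [c [c' [Eab [Mcc' [s cc']]]]]]] Edir My Myv.
have [r vr] := segment_sub (proj1 (Mcc' _) Myv) (proj1 (Mcc' _) My).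
have Eba := Edir _ _ (proj2 (Eab _) (segment_r a b)) (proj2 (Eab _) (segment_l a b)).
by rewrite addrC addKr cc' scalerA in vr; rewrite vr crossZl Eba scaler0.
Qed.

Lemma card_ge_injective (T : finType) (A : (V -> Prop) -> Prop) (F : T -> V -> Prop) :
  (forall i, A (F i)) -> (forall i j, seteq (F i) (F j) -> i = j) -> card_ge A #|T|.
Proof. by move=> AF Finj; exists (fun i => F (enum_val i)); split => // i j /Finj/enum_val_inj. Qed.

Lemma card_geW (A : (V -> Prop) -> Prop) (m m' : nat) : (m <= m')%N -> card_ge A m' -> card_ge A m.
Proof.
move=> mm' [f [Af finj]]; exists (fun i => f (widen_ord mm' i)); split => // i j /finj.
by move/(congr1 val) => /= ij; apply: val_inj.
Qed.

(** * Zonotopes and their faces *)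

Section Zonotopes.
Variables (n : nat) (g : 'I_n -> V).
Implicit Types (c : V) (S : pred 'I_n) (t : 'I_n -> R).

Definition zono c S : V -> Prop := fun x =>
  exists t, (forall i, 0 <= t i <= 1) /\ (forall i, ~~ S i -> t i = 0) /\
    x = c + \sum_i t i *: g i.

Lemma zono_ext c c' S S' : c = c' -> S =1 S' -> seteq (zono c S) (zono c' S').
Proof.
move=> <- SS' x; split; case=> t [t01 [tS ->]]; exists t; split => //; split => // i.
  by rewrite -SS'; apply: tS.
by rewrite SS'; apply: tS.
Qed.

Lemma zono_base c S : zono c S c.
Proof.
exists (fun _ => 0); split; first by move=> i; rewrite lexx ler01.
by split => //; rewrite big1 ?addr0 // => i _; rewrite scale0r.
Qed.

Lemma zono_gen c S i : S i -> zono c S (c + g i).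
Proof.
move=> Si; exists (fun j => if j == i then 1 else 0); split.
  by move=> j; case: ifP; rewrite ?lexx ?ler01.
split; first by move=> j; case: eqP => // ->; rewrite Si.
rewrite (bigD1 i) //= eqxx scale1r big1 ?addr0 // => j /negbTE ->.
by rewrite scale0r.
Qed.

Lemma zono_translate c S v : seteq (translate (zono c S) v) (zono (c + v) S).
Proof.
move=> x; rewrite /translate; split; case=> s [s01 [sS e]]; exists s; split => //; split => //.
  by rewrite -[x](subrK v) e addrAC.
by rewrite e addrAC addrK.
Qed.

Lemma dot_zono u c t : dot u (c + \sum_i t i *: g i) = dot u c + \sum_i t i * dot u (g i).
Proof. by rewrite dotD dot_sum; congr (_ + _); apply: eq_bigr => i _; rewrite dotZ. Qed.

Lemma sum_gens_merge (Q : pred 'I_n) t : (forall i, Q i -> t i = 0) ->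
  \sum_(i | Q i) g i + \sum_i t i *: g i = \sum_i (if Q i then 1 else t i) *: g i.
Proof.
move=> tQ; rewrite (big_mkcond Q) -big_split /=; apply: eq_bigr => i _.
by case: ifP => Qi; rewrite ?add0r // tQ // scale0r addr0 scale1r.
Qed.

Definition up_gens u S i : bool := S i && (0 < dot u (g i)).
Definition flat_gens u S i : bool := S i && (dot u (g i) == 0).
Arguments up_gens u S i /.
Arguments flat_gens u S i /.

Lemma face_zono_sub c S u x : face_of (zono c S) u x ->
  zono (c + \sum_(i | up_gens u S i) g i) (flat_gens u S) x.
Proof.
case=> [[t [t01 [tS ->]]] xmax].
pose t' i : R := (up_gens u S i)%:R.
have t'01 i : 0 <= t' i <= 1 by rewrite /t'; case: (up_gens u S i); rewrite ?lexx ?ler01.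
have : dot u (c + \sum_i t' i *: g i) <= dot u (c + \sum_i t i *: g i).
  by apply: xmax; exists t'; split => //; split => // i /negbTE Si; rewrite /t' /= Si.
rewrite !dot_zono lerD2l => le_t't.
have gap_ge0 i : true -> 0 <= (t' i - t i) * dot u (g i).
  move=> _; rewrite /t' /=; have [Si|Si] := boolP (S i); last by rewrite tS // subrr mul0r.
  have /andP[t0 t1] := t01 i.
  case: ltgtP => pi /=; [apply: mulr_ge0; rewrite ?subr_ge0 // ltW //|
    by rewrite sub0r mulNr oppr_ge0 mulr_ge0_le0 // ltW|by rewrite -pi mulr0].
have gap0 : \sum_i (t' i - t i) * dot u (g i) = 0.
  apply/eqP; rewrite eq_le sumr_ge0 // andbT.
  by under eq_bigr do rewrite mulrBl; rewrite sumrB subr_le0.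
exists (fun i => if flat_gens u S i then t i else 0); split.
  by move=> i; case: ifP; rewrite ?t01 ?lexx ?ler01.
split; first by move=> i /negbTE ->.
rewrite -addrA sum_gens_merge; last by move=> i /andP[_ /gt_eqF pi]; rewrite /= pi andbF.
congr (_ + _); apply: eq_bigr => i _; congr (_ *: _); rewrite /=.
have [Si|Si] := boolP (S i); last by rewrite tS.
have := psumr_eq0P gap_ge0 gap0 (i := i) isT; rewrite /t' /= Si /=; case: ltgtP => pi /=.
- by move/eqP; rewrite mulf_eq0 (gt_eqF pi) orbF subr_eq0 => /eqP.
- by move/eqP; rewrite mulf_eq0 (lt_eqF pi) orbF sub0r oppr_eq0 => /eqP.
- by [].
Qed.

Lemma zono_sub_face c S u x : zono (c + \sum_(i | up_gens u S i) g i) (flat_gens u S) x ->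
  face_of (zono c S) u x.
Proof.
case=> t [t01 [tflat ->]].
rewrite -addrA sum_gens_merge; last by move=> i /andP[Si /gt_eqF pi]; rewrite tflat //= Si pi.
pose T i := if up_gens u S i then 1 else t i.
rewrite -/(\sum_i T i *: g i).
have T01 i : 0 <= T i <= 1 by rewrite /T; case: ifP; rewrite ?t01 ?lexx ?ler01.
have TS i : ~~ S i -> T i = 0 by move=> /negbTE Si; rewrite /T /= Si tflat //= Si.
split; first by exists T.
case=> y [s [s01 [sS ->]]]; rewrite !dot_zono lerD2l; apply: ler_sum => i _.
have [Si|Si] := boolP (S i); last by rewrite sS // TS // !mul0r.
have /andP[s0 s1] := s01 i; rewrite /T /= Si /=.
case: ltgtP => pi /=; first by rewrite ler_wpM2r // ltW.
  by rewrite tflat /= ?Si ?lt_eqF // mul0r mulr_ge0_le0 // ltW.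
by rewrite -pi !mulr0.
Qed.

Lemma face_zono c S u :
  seteq (face_of (zono c S) u) (zono (c + \sum_(i | up_gens u S i) g i) (flat_gens u S)).
Proof. by move=> x; split; [apply: face_zono_sub | apply: zono_sub_face]. Qed.

Section ParallelGenerators.
Variables (S : pred 'I_n) (v : V) (lam : 'I_n -> R).
Hypothesis gS_parallel : forall i, S i -> g i = lam i *: v.

Lemma sum_gens_parallel t : (forall i, ~~ S i -> t i = 0) ->
  \sum_i t i *: g i = (\sum_i t i * lam i) *: v.
Proof.
move=> tS; rewrite scaler_suml; apply: eq_bigr => i _.
have [Si|Si] := boolP (S i); first by rewrite gS_parallel // scalerA.
by rewrite tS // !mul0r !scale0r.
Qed.

Lemma zono_parallel_in_line c x : zono c S x -> exists s : R, x = c + s *: v.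
Proof. by case=> t [_ [tS ->]]; exists (\sum_i t i * lam i); rewrite sum_gens_parallel. Qed.

Let lo i := if S i && (lam i < 0) then lam i else 0.
Let hi i := if S i && (0 < lam i) then lam i else 0.
Let a c := c + (\sum_i lo i) *: v.
Let b c := c + (\sum_i hi i) *: v.

Let b_sub_a c : b c - a c = (\sum_i (hi i - lo i)) *: v.
Proof. by rewrite sumrB scalerBl opprD addrACA subrr add0r. Qed.

Let zono_parallel_sub c x : zono c S x -> segment (a c) (b c) x.
Proof.
case=> t [t01 [tS ->]]; rewrite sum_gens_parallel //.
pose s := \sum_i (t i * lam i - lo i); pose w := \sum_i (hi i - lo i).
have term i : 0 <= t i * lam i - lo i <= hi i - lo i.
  rewrite /lo /hi; have [Si|Si] := boolP (S i); last by rewrite tS // mul0r subrr lexx.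
  by have /andP[t0 t1] := t01 i; case: ltgtP => li /=; apply/andP; split; nra.
have s0 : 0 <= s by apply: sumr_ge0 => i _; case/andP: (term i).
have sw : s <= w by apply: ler_sum => i _; case/andP: (term i).
have sws : s / w * w = s.
  have [w0|w0] := eqVneq w 0; last by rewrite mulfVK.
  by rewrite w0 mulr0; apply/eqP; rewrite eq_le s0 -w0 sw.
exists (s / w); split.
  have [w0|w0] := eqVneq w 0; first by rewrite w0 invr0 mulr0 lexx ler01.
  by rewrite divr_ge0 ?(le_trans s0 sw) //= ler_pdivrMr ?mul1r // lt_def w0 (le_trans s0).
by rewrite b_sub_a scalerA sws /a -addrA -scalerDl /s sumrB addrCA subrr addr0.
Qed.

Let segment_sub_zono c x : segment (a c) (b c) x -> zono c S x.
Proof.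
case=> s [/andP[s0 s1] ->]; rewrite b_sub_a.
pose t i := if S i then (if 0 < lam i then s else if lam i < 0 then 1 - s else 0) else 0.
have tS i : ~~ S i -> t i = 0 by rewrite /t => /negbTE ->.
exists t; split.
  move=> i; rewrite /t; case: (S i); last by rewrite lexx ler01.
  case: ifP => _; first by rewrite s0 s1.
  by case: ifP => _; rewrite ?subr_ge0 ?s1 ?gerBl ?s0 ?lexx ?ler01.
split => //; rewrite sum_gens_parallel // /a -addrA scalerA -scalerDl.
congr (_ + _ *: _); rewrite mulr_sumr -big_split /=; apply: eq_bigr => i _.
rewrite /t /lo /hi; case: (S i) => /=; last by rewrite subrr mulr0 addr0 mul0r.
by case: ltgtP => li /=; [ring | ring | rewrite subrr mulr0 mul0r add0r].
Qed.

Lemma zono_parallel_segment c : exists a b, seteq (zono c S) (segment a b).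
Proof.
by exists (a c), (b c) => x; split; [apply: zono_parallel_sub | apply: segment_sub_zono].
Qed.

End ParallelGenerators.

Lemma not_in_line_zono c S d : d != 0 -> not_in_line (zono c S) ->
  exists i, S i /\ cross (g i) d != 0.
Proof.
move=> d0 nline; have [/existsP[i /andP[Si gd]]|] := boolP [exists i, S i && (cross (g i) d != 0)].
  by exists i.
rewrite negb_exists => /forallP gpar; case: nline; exists c, d => x.
apply: (@zono_parallel_in_line _ _ (fun i => dot (g i) d / dot d d)) => i Si.
by apply: cross_eq0_scale => //; apply/eqP; have := gpar i; rewrite Si negbK.
Qed.

Lemma sum_scale_zono (K : finType) (l : K -> R) c (tt : K -> 'I_n -> R) :
  \sum_k l k *: (c + \sum_j tt k j *: g j) =
  (\sum_k l k) *: c + \sum_j (\sum_k l k * tt k j) *: g j.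
Proof.
rewrite scaler_suml; under eq_bigr do rewrite scalerDr scaler_sumr.
rewrite big_split /=; congr (_ + _); rewrite exchange_big /=; apply: eq_bigr => j _.
by rewrite scaler_suml; apply: eq_bigr => k _; rewrite scalerA.
Qed.

Lemma zono_conv c S : exists m (p : 'I_m -> V), seteq (zono c S) (conv p).
Proof.
pose vert (f : {ffun 'I_n -> bool}) := c + \sum_j ((f j && S j)%:R : R) *: g j.
exists #|{ffun 'I_n -> bool}|, (fun k => vert (enum_val k)) => x; split.
- case=> t [t01 [tS ->]].
  pose l (f : {ffun 'I_n -> bool}) := \prod_i (if f i then t i else 1 - t i).
  exists (fun k => l (enum_val k)); split.
    move=> k; apply: prodr_ge0 => i _; have /andP[t0 t1] := t01 i.
    by case: ifP; rewrite ?subr_ge0.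
  rewrite -(big_enum_val (A := predT) l) sum_prod_weights; split => //.
  rewrite -(big_enum_val (A := predT) (fun f => l f *: vert f)) sum_scale_zono.
  rewrite sum_prod_weights scale1r; congr (_ + _); apply: eq_bigr => j _; congr (_ *: _).
  have [Sj|Sj] := boolP (S j); last by rewrite tS // big1 // => f _; rewrite andbF mulr0.
  by rewrite -(sum_prod_weights_at t j); apply: eq_bigr => f _; rewrite andbT.
- case=> l [l0 [l1 ->]]; rewrite sum_scale_zono l1 scale1r.
  exists (fun j => \sum_k l k * (enum_val k j && S j)%:R); split.
    move=> j; rewrite sumr_ge0 => [|k _]; last by rewrite mulr_ge0.
    rewrite -[X in _ <= X]l1 ler_sum // => k _; rewrite ler_piMr //.
    by case: (_ && _); rewrite ?ler01 ?lexx.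
  by split => // j /negbTE Sj; apply: big1 => k _; rewrite Sj andbF mulr0.
Qed.

Lemma zono_minkowski c S :
  seteq (zono c predT) (minkowski (zono c S) (zono 0 (predC S))).
Proof.
move=> x; split.
- case=> t [t01 [_ ->]].
  pose tS j := if S j then t j else 0; pose tC j := if S j then 0 else t j.
  have tS01 j : 0 <= tS j <= 1 by rewrite /tS; case: ifP; rewrite ?t01 ?lexx ?ler01.
  have tC01 j : 0 <= tC j <= 1 by rewrite /tC; case: ifP; rewrite ?t01 ?lexx ?ler01.
  exists (c + \sum_j tS j *: g j), (\sum_j tC j *: g j); split.
    by exists tS; split => //; split => // j /negbTE; rewrite /tS => ->.
  split.
    by exists tC; rewrite add0r; split => //; split => // j; rewrite /tC /= negbK => ->.
  rewrite -addrA -big_split /=; congr (_ + _); apply: eq_bigr => j _.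
  by rewrite /tS /tC; case: ifP; rewrite scale0r ?addr0 ?add0r.
- case=> y [z [[t [t01 [tS ->]]] [[s [s01 [sS ->]]] ->]]].
  exists (fun j => t j + s j); split.
    move=> j; have [Sj|Sj] := boolP (S j); first by rewrite sS ?negbK // addr0.
    by rewrite tS // add0r.
  split => //; rewrite add0r -addrA -big_split /=; congr (_ + _); apply: eq_bigr => j _.
  by rewrite scalerDl.
Qed.

Lemma zono_planar_polygon c S j0 j1 : S j0 -> S j1 -> cross (g j0) (g j1) != 0 ->
  (forall j, S j -> det3 (g j0) (g j1) (g j) = 0) -> polygon (zono c S).
Proof.
move=> Sj0 Sj1 j01 Splane; split; first exact: zono_conv.
split.
  exists (cross (g j0) (g j1)), (dot (cross (g j0) (g j1)) c); split => // _ [t [_ [tS ->]]].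
  rewrite dot_zono big1 ?addr0 // => j _; have [Sj|Sj] := boolP (S j).
    by rewrite -det3E Splane // mulr0.
  by rewrite tS // mul0r.
move=> line; case/eqP: j01.
exact: (in_line_cross line (zono_base c S) (zono_gen c Sj0) (zono_gen c Sj1)).
Qed.

Lemma exists_edge_normal d e : cross d e != 0 ->
  exists w, dot w d = 0 /\ forall j, dot w (g j) = 0 -> cross (g j) d = 0.
Proof.
(* p and q span the plane orthogonal to d, and s exceeds every ratio |p.g_j| / |q.g_j|, so
   (p + s q).g_j = 0 forces p.g_j = q.g_j = 0, i.e. g_j parallel to d. *)
move=> de; set p := cross d e; set q := cross d p.
have pd : dot p d = 0 by rewrite dot_crossl.
have qd : dot q d = 0 by rewrite dot_crossl.
have pp0 : dot p p != 0 by rewrite gt_eqF ?dotvv_gt0.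
have pq_parallel j : dot p (g j) = 0 -> dot q (g j) = 0 -> cross (g j) d = 0.
  move=> pj qj; have := cross_crossl p q (g j).
  rewrite pj qj !scale0r subr0 /q cross_crossr pd scale0r subr0 crossZl => /eqP.
  by rewrite scaler_eq0 (negbTE pp0) crossC oppr_eq0 => /eqP.
pose s := 1 + \sum_j `|dot p (g j)| / `|dot q (g j)|.
have ratio_le j : `|dot p (g j)| / `|dot q (g j)| <= s - 1.
  by rewrite addrC addKr (bigD1 j) //= lerDl sumr_ge0 // => i _; rewrite divr_ge0.
exists (p + s *: q); split; first by rewrite dotDl dotZl pd qd mulr0 addr0.
move=> j; rewrite dotDl dotZl => wj.
have [qj|qj] := eqVneq (dot q (g j)) 0; first by apply: pq_parallel; rewrite qj mulr0 addr0 in wj.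
have pj : `|dot p (g j)| = s * `|dot q (g j)|.
  move/eqP: wj; rewrite addr_eq0 => /eqP ->.
  by rewrite normrN normrM ger0_norm // addr_ge0 ?sumr_ge0 // => i _; rewrite divr_ge0.
have : `|dot q (g j)| <= 0.
  move: (ratio_le j); rewrite ler_pdivrMr ?normr_gt0 // pj mulrBl mul1r.
  by rewrite -subr_ge0 addrAC subrr add0r oppr_ge0.
by rewrite leNgt normr_gt0 qj.
Qed.

End Zonotopes.

Lemma zonotope_zono P : zonotope P -> exists n (g : 'I_n -> V) c, seteq P (zono g c predT).
Proof.
case=> n [a [b ab]]; exists n, (fun i => b i - a i), (\sum_i a i) => x; rewrite ab.
split; case=> t [t01 e]; exists t; split => //.
  by split => //; rewrite e big_split.
by case: e => _ ->; rewrite big_split.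
Qed.

Section ZonotopeFaces.
Variables (n : nat) (g : 'I_n -> V) (c : V) (P : V -> Prop).
Hypothesis P_zono : seteq P (zono g c predT).
Hypothesis P_full : full_dim P.

Definition distinct_planes d (xs : seq 'I_n) : bool :=
  pairwise (fun p q => det3 d (g p) (g q) != 0) xs.

Definition face_vertex u := c + \sum_(i | 0 < dot u (g i)) g i.
Definition face_gens u i : bool := dot u (g i) == 0.

Lemma face_zonoP u : seteq (face_of P u) (zono g (face_vertex u) (face_gens u)).
Proof.
apply: seteq_trans (face_of_ext u P_zono) _.
by apply: seteq_trans (face_zono g c predT u) _; apply: zono_ext.
Qed.

Lemma face_vertex_in u : face_of P u (face_vertex u).
Proof. by apply/face_zonoP; apply: zono_base. Qed.

Lemma face_vertex_gen u i : dot u (g i) = 0 -> face_of P u (face_vertex u + g i).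
Proof. by move=> ui; apply/face_zonoP; apply: zono_gen; rewrite /face_gens ui. Qed.

Lemma eq_face_orthogonal u u' i : seteq (face_of P u) (face_of P u') -> dot u (g i) = 0 ->
  dot u' (g i) = 0.
Proof.
move=> uu' ui; have := face_of_dot_eq (proj1 (uu' _) (face_vertex_gen ui))
  (proj1 (uu' _) (face_vertex_in u)).
by rewrite dotD -[X in _ = X]addr0 => /addrI.
Qed.

Lemma face_opp_neq u : u != 0 -> ~ seteq (face_of P u) (face_of P (- u)).
Proof.
move=> u0 uu'; apply: (P_full u0 (c := dot u (face_vertex u))) => y Py.
have [_ umax] := face_vertex_in u; have [_ u'max] := proj1 (uu' _) (face_vertex_in u).
by apply/eqP; rewrite eq_le umax //=; have := u'max y Py; rewrite !dotNl lerN2.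
Qed.

Lemma face_of_face_translate u w : (forall j, dot w (g j) = 0 -> dot u (g j) = 0) ->
  exists t, seteq (translate (face_of P w) t) (face_of (face_of P u) w).
Proof.
move=> wu; exists (face_vertex u + \sum_(j | up_gens g w (face_gens u) j) g j - face_vertex w).
apply: seteq_trans (translate_ext _ (face_zonoP w)) _.
apply: seteq_trans (zono_translate _ _ _ _) _; apply: seteq_sym.
apply: seteq_trans (face_of_ext w (face_zonoP u)) _.
apply: seteq_trans (face_zono _ _ _ _) _; apply: zono_ext; first by rewrite addrCA subrr addr0.
move=> j; rewrite /flat_gens /face_gens; have [wj|wj] := eqVneq (dot w (g j)) 0.
  by rewrite andbT; apply/eqP/wu.
by rewrite andbF.
Qed.

(** * Belts *)

Lemma exists_edge_along k e : cross (g k) e != 0 ->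
  exists w, [/\ is_edge P (face_of P w), dot w (g k) = 0 &
    forall j, dot w (g j) = 0 -> cross (g j) (g k) = 0].
Proof.
move=> ke; have [w [wk wpar]] := exists_edge_normal g ke.
have k0 : g k != 0 by apply: contraNneq ke => ->; rewrite cross0l.
have [a [b ab]] : exists a b, seteq (zono g (face_vertex w) (face_gens w)) (segment a b).
  apply: (zono_parallel_segment (lam := fun j => dot (g j) (g k) / dot (g k) (g k))).
  by move=> j /eqP/wpar; apply: cross_eq0_scale.
have Mab := seteq_trans (face_zonoP w) ab.
exists w; split => //; split; first by exists w.
exists a, b; split => //; apply: contra k0 => /eqP ba.
have [s] := segment_sub (proj1 (Mab _) (face_vertex_gen wk)) (proj1 (Mab _) (face_vertex_in w)).
by rewrite ba subrr scaler0 addrC addKr => ->.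
Qed.

Lemma face_in_belt k l w u : is_edge P (face_of P w) ->
  (forall j, dot w (g j) = 0 -> cross (g j) (g k) = 0) ->
  u != 0 -> dot u (g k) = 0 -> dot u (g l) = 0 -> cross (g k) (g l) != 0 ->
  in_belt P (face_of P w) (face_of P u).
Proof.
move=> [_ [a [b [ab Mab]]]] wpar u0 uk ul kl.
have k0 : g k != 0 by apply: contraNneq kl => ->; rewrite cross0l.
split.
  split; first by exists u.
  move=> line; case/eqP: kl.
  exact: in_line_cross line (face_vertex_in u) (face_vertex_gen uk) (face_vertex_gen ul).
have [t Mt] : exists t, seteq (translate (face_of P w) t) (face_of (face_of P u) w).
  apply: face_of_face_translate => j /wpar jk.
  by rewrite (cross_eq0_scale k0 jk) dotZ uk mulr0.
exists t; split; first by exists w.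
exists (a + t), (b + t); split; first by apply: contra ab => /eqP/addIr ->.
exact: seteq_trans (translate_ext t Mab) (translate_segment a b t).
Qed.

Lemma belt_card_ge k (xs : seq 'I_n) : (1 < size xs)%N -> distinct_planes (g k) xs ->
  exists M, [/\ is_edge P M, card_ge (in_belt P M) (2 * size xs) & exists y, M y /\ M (y + g k)].
Proof.
move=> xs2 xs_planes; pose x (p : 'I_(size xs)) := nth k xs p.
have planes p q : p != q -> det3 (g k) (g (x p)) (g (x q)) != 0.
  have /(pairwiseP k) homo := xs_planes.
  case: (ltngtP p q) => [pq _|qp _|/val_inj ->]; last by rewrite eqxx.
    by apply: homo; rewrite // inE ltn_ord.
  by rewrite det3_swap23 oppr_eq0; apply: homo; rewrite // inE ltn_ord.
pose p0 := Ordinal (ltn_trans (ltnSn 0) xs2); pose p1 := Ordinal xs2.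
have kx p : cross (g k) (g (x p)) != 0.
  have [q pq] : exists q, p != q.
    by case: (eqVneq p p0) => [->|]; [exists p1 | exists p0].
  by apply: contraNneq (planes _ _ pq) => /det3_cross12_eq0 ->.
have [w [Medge wk wpar]] := exists_edge_along (kx p0).
pose u (sp : bool * 'I_(size xs)) := (-1) ^+ sp.1 *: cross (g k) (g (x sp.2)).
have u0 sp : u sp != 0 by rewrite scaler_eq0 signr_eq0 kx.
have uk sp : dot (u sp) (g k) = 0 by rewrite dotZl dot_crossl mulr0.
have ux sp : dot (u sp) (g (x sp.2)) = 0 by rewrite dotZl dot_crossr mulr0.
exists (face_of P w); split => //; last first.
  by exists (face_vertex w); split; [apply: face_vertex_in | apply: face_vertex_gen].
have := @card_ge_injective _ (in_belt P (face_of P w)) (fun sp => face_of P (u sp)).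
rewrite card_prod card_bool card_ord; apply.
  by move=> sp; apply: face_in_belt (kx sp.2) => //.
move=> [s p] [s' p'] FF'.
have pp' : p' = p.
  have := eq_face_orthogonal FF' (ux (s, p)); rewrite dotZl -det3E => /eqP.
  by rewrite mulf_eq0 signr_eq0 /=; apply: contraTeq; apply: planes.
rewrite pp' in FF' *; congr (_, _); apply/eqP; apply: contraT => ss'; exfalso.
apply: (face_opp_neq (u0 (s, p))); apply: seteq_trans FF' _.
by rewrite /u /= -scaleNr -signrN; case: s s' ss' => -[].
Qed.

Lemma edge_generator E : is_edge P E ->
  exists i0, [/\ g i0 != 0, exists y, E y /\ E (y + g i0) &
    forall x y, E x -> E y -> cross (x - y) (g i0) = 0].
Proof.
case=> [[uE EuE] [a [b [ab Eab]]]]; have EZ := seteq_trans EuE (face_zonoP uE).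
have [i0 [zi0 gi0]] : exists i0, face_gens uE i0 /\ g i0 != 0.
  have [/existsP[i /andP[zi gi]]|] := boolP [exists i, face_gens uE i && (g i != 0)].
    by exists i.
  rewrite negb_exists => /forallP zone0; case/eqP: ab.
  suff Epoint x : E x -> x = face_vertex uE.
    by rewrite (Epoint _ (proj2 (Eab _) (segment_l a b))) (Epoint _ (proj2 (Eab _) (segment_r a b))).
  move=> /EZ[t [_ [tS ->]]]; rewrite big1 ?addr0 // => i _.
  have [zi|zi] := boolP (face_gens uE i); last by rewrite tS // scale0r.
  by have := zone0 i; rewrite zi negbK => /eqP ->; rewrite scaler0.
have Ev : E (face_vertex uE) by apply/EZ; apply: zono_base.
have Evg : E (face_vertex uE + g i0) by apply/EZ; apply: zono_gen.
have [s0 gs0] : exists s0, g i0 = s0 *: (b - a).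
  by have [s0 e] := segment_sub (proj1 (Eab _) Evg) (proj1 (Eab _) Ev); exists s0; rewrite -e addrC addKr.
exists i0; split => //; first by exists (face_vertex uE).
by move=> x y /Eab Ex /Eab Ey; have [s ->] := segment_sub Ex Ey; rewrite gs0 crossZZ.
Qed.

Lemma belt_facet_normal E F d y : E y -> E (y + d) -> d != 0 -> in_belt P E F ->
  exists u j, [/\ u != 0, seteq F (face_of P u), dot u d = 0, dot u (g j) = 0 &
    cross (g j) d != 0].
Proof.
move=> Ey Eyd d0 [[[u [u0 Fu]] Fline] [t [[w Ftw] _]]].
have Ft x : E x -> F (x + t).
  by move=> Ex; case: (proj1 (Ftw (x + t))); rewrite /translate ?addrK.
have ud : dot u d = 0.
  have := face_of_dot_eq (proj1 (Fu _) (Ft _ Eyd)) (proj1 (Fu _) (Ft _ Ey)).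
  by rewrite !dotD; lra.
have [j [zj jd]] := not_in_line_zono d0 (not_in_line_ext (seteq_trans Fu (face_zonoP u)) Fline).
by exists u, j; split => //; apply/eqP.
Qed.

Lemma coplanar_normals_opposite d x x' u u' : cross d x != 0 -> cross d x' != 0 ->
  det3 d x x' = 0 -> u != 0 -> u' != 0 -> dot u d = 0 -> dot u x = 0 -> dot u' d = 0 ->
  dot u' x' = 0 -> ~ seteq (face_of P u) (face_of P u') -> exists2 mu, mu < 0 & u' = mu *: u.
Proof.
move=> dx dx' dxx' u0 u0' ud ux u'd u'x' uu'.
have [mu e] := plane_normals_parallel dx dx' dxx' u0 ud ux u'd u'x'.
exists mu => //; rewrite ltNge le_eqVlt negb_or; apply/andP; split.
  by apply: contraNneq u0' => mu0; rewrite e -mu0 scale0r.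
by apply/negP => mu0; apply: uu'; apply: seteq_sym; rewrite e; apply: face_of_scale.
Qed.

Lemma belt_generators E d y m : E y -> E (y + d) -> d != 0 -> card_ge (in_belt P E) (2 * m) ->
  exists a : 'I_m -> 'I_n, forall p q, p != q -> det3 d (g (a p)) (g (a q)) != 0.
Proof.
move=> Ey Eyd d0 [f [fbelt finj]].
have /fin_all_exists[UJ UJP] : forall i, exists uj : V * 'I_n,
    [/\ uj.1 != 0, seteq (f i) (face_of P uj.1), dot uj.1 d = 0,
       dot uj.1 (g uj.2) = 0 & cross (g uj.2) d != 0].
  by move=> i; have [u [j uj]] := belt_facet_normal Ey Eyd d0 (fbelt i); exists (u, j).
pose r i i' := det3 d (g (UJ i).2) (g (UJ i').2) == 0.
have dJ i : cross d (g (UJ i).2) != 0 by rewrite crossC oppr_eq0; case: (UJP i).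
have opposite i i' : i != i' -> r i i' -> exists2 mu, mu < 0 & (UJ i').1 = mu *: (UJ i).1.
  move=> ii' /eqP rii'; have [u0 Fu ud uj _] := UJP i; have [u0' Fu' ud' uj' _] := UJP i'.
  apply: coplanar_normals_opposite (dJ i) (dJ i') rii' u0 u0' ud uj ud' uj' _ => uu'.
  by case/eqP: ii'; apply: finj; apply: seteq_trans Fu (seteq_trans uu' (seteq_sym Fu')).
have rsym : symmetric r by move=> i j; rewrite /r det3_swap23 oppr_eq0.
have rtrans : transitive r.
  move=> j i k /eqP rij /eqP rjk; apply/eqP.
  by apply: det3_exchange (dJ j) _ rjk; rewrite det3_swap23 rij oppr0.
have req : equivalence_rel r.
  apply/equivalence_relP; split; first by move=> i; rewrite /r det3_xyy.
  exact: sym_left_transitive.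
have classes i : (#|[pred j | r i j]| <= 2)%N.
  rewrite leqNgt; apply/negP => /card_gt2P[j1 [j2 [j3 [[r1 r2 r3] [n12 n23 n31]]]]].
  have rr j j' : r i j -> r i j' -> r j j' by move=> rj rj'; apply: rtrans rj'; rewrite rsym.
  have [mu1 mu1_neg e2] := opposite _ _ n12 (rr _ _ r1 r2).
  have [mu2 mu2_neg e3] := opposite _ _ n23 (rr _ _ r2 r3).
  have n13 : j1 != j3 by rewrite eq_sym.
  have [mu3 mu3_neg e3'] := opposite _ _ n13 (rr _ _ r1 r3).
  have : (mu3 - mu2 * mu1) *: (UJ j1).1 = 0 by rewrite scalerBl -e3' -scalerA -e2 -e3 subrr.
  move/eqP; rewrite scaler_eq0; case: (UJP j1) => /negbTE -> _ _ _ _; rewrite orbF subr_eq0.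
  by move/eqP => e; move: mu3_neg; rewrite e ltNge ltW // (nmulr_rgt0 _ mu2_neg).
have [a aP] := exists_pairwise_unrelated req classes (eq_leq (esym (card_ord _))).
by exists (fun p => (UJ (a p)).2) => p q /aP.
Qed.

Lemma not_prism_generator i0 j0 j1 : ~ prism P -> cross (g j0) (g j1) != 0 ->
  det3 (g j0) (g j1) (g i0) != 0 ->
  exists h, cross (g h) (g i0) != 0 /\ det3 (g j0) (g j1) (g h) != 0.
Proof.
move=> nprism j01 i0_off.
have i00 : g i0 != 0 by apply: contraNneq i0_off => ->; rewrite det3_cross23_eq0 ?cross0r.
have [/existsP[h /andP[hi0 h_off]]|] :=
  boolP [exists h, (cross (g h) (g i0) != 0) && (det3 (g j0) (g j1) (g h) != 0)].
  by exists h.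
rewrite negb_exists => /forallP noh; case: nprism.
pose W j := det3 (g j0) (g j1) (g j) == 0.
have [A [B AB]] : exists A B, seteq (zono g 0 (predC W)) (segment A B).
  apply: (zono_parallel_segment (lam := fun j => dot (g j) (g i0) / dot (g i0) (g i0))).
  move=> j /= Wj; apply: cross_eq0_scale => //; apply/eqP.
  by case/nandP: (noh j) => /negPn // Wj'; case/negP: Wj.
have Q0 := zono_base g c W.
have Qj0 : zono g c W (c + g j0) by apply: zono_gen; rewrite /W det3_xyx.
have Qj1 : zono g c W (c + g j1) by apply: zono_gen; rewrite /W det3_xyy.
exists (zono g c W), A, B; split.
  apply: (zono_planar_polygon c (j0 := j0) (j1 := j1)) => //; rewrite /W ?det3_xyx ?det3_xyy //.
  by move=> j /eqP.
split.
  apply: seteq_trans P_zono (seteq_trans (zono_minkowski g c W) _) => x.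
  by split; case=> y [z [Qy [Sz ->]]]; exists y, z; split => //; split => //; apply/AB.
move=> u e u0 uQ.
have uj0 : dot u (g j0) = 0 by have := uQ _ Qj0; rewrite dotD (uQ _ Q0); lra.
have uj1 : dot u (g j1) = 0 by have := uQ _ Qj1; rewrite dotD (uQ _ Q0); lra.
have [mu umu] : exists mu, u = mu *: cross (g j0) (g j1) by eexists; apply: orthogonal2_scale.
have i0W : predC W i0 by rewrite /= /W.
have [s gs] : exists s, g i0 = s *: (B - A).
  have [s es] := segment_sub (proj1 (AB _) (zono_gen g 0 i0W)) (proj1 (AB _) (zono_base g 0 _)).
  by exists s; rewrite -es add0r subr0.
apply: contra i0_off => /eqP uBA.
have : dot u (g i0) = 0 by rewrite gs dotZ uBA mulr0.
rewrite umu dotZl -det3E => /eqP; rewrite mulf_eq0 => /orP[/eqP mu0|//].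
by case/eqP: u0; rewrite umu mu0 scale0r.
Qed.

Section GeneratorChoice.
Variables (i0 : 'I_n) (m : nat) (a : 'I_m -> 'I_n).
Hypothesis a_planes : forall p q, p != q -> det3 (g i0) (g (a p)) (g (a q)) != 0.

Let a_cross p q : p != q -> cross (g (a p)) (g (a q)) != 0.
Proof. by move=> /a_planes; apply: contraNneq => /det3_cross23_eq0 ->. Qed.

Lemma generator_choice_coplanar i j : ~ prism P -> i != j ->
  (forall p, p != i -> p != j -> det3 (g (a i)) (g (a j)) (g (a p)) = 0) ->
  exists k xs, [/\ cross (g k) (g i0) != 0, size xs = m & distinct_planes (g k) xs].
Proof.
move=> nprism ij ij_plane.
have i0_off : det3 (g (a i)) (g (a j)) (g i0) != 0 by rewrite -det3_cycle a_planes.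
have [h [hi0 h_off]] := not_prism_generator nprism (a_cross ij) i0_off.
have inW p : det3 (g (a i)) (g (a j)) (g (a p)) = 0.
  have [->|pi] := eqVneq p i; first exact: det3_xyx.
  have [->|pj] := eqVneq p j; first exact: det3_xyy.
  exact: ij_plane.
exists h, [seq a p | p <- enum 'I_m]; split => //; first by rewrite size_map size_enum_ord.
have := enum_uniq 'I_m; rewrite /distinct_planes pairwise_map uniq_pairwise.
apply: sub_pairwise => p q /= pq; apply: contra h_off => /eqP hpq; apply/eqP.
exact: det3_same_plane (a_cross ij) (a_cross pq) (inW p) (inW q) hpq.
Qed.

Lemma generator_choice_apart i p q r : uniq [:: i; p; q; r] ->
  det3 (g (a i)) (g (a p)) (g (a q)) != 0 -> det3 (g (a i)) (g (a p)) (g (a r)) != 0 ->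
  det3 (g (a i)) (g (a q)) (g (a r)) != 0 ->
  exists k xs, [/\ cross (g k) (g i0) != 0, size xs = 4 & distinct_planes (g k) xs].
Proof.
rewrite /= !inE !negb_or => /and4P[/and3P[ip iq ir] _ _ _] ipq ipr iqr.
have i0_planes j : i != j -> det3 (g (a i)) (g i0) (g (a j)) != 0.
  by move=> ij; rewrite det3_swap12 oppr_eq0 a_planes.
exists (a i), [:: i0; a p; a q; a r]; split => //.
  by rewrite crossC oppr_eq0; apply: contraNneq (a_planes ip) => /det3_cross12_eq0 ->.
by rewrite /distinct_planes /= !i0_planes // ipq ipr iqr.
Qed.

End GeneratorChoice.

Lemma generator_choice i0 (a : 'I_5 -> 'I_n) : ~ prism P ->
  (forall p q, p != q -> det3 (g i0) (g (a p)) (g (a q)) != 0) ->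
  exists k xs, [/\ cross (g k) (g i0) != 0, (4 <= size xs)%N & distinct_planes (g k) xs].
Proof.
move=> nprism a_planes; pose Z p q r := det3 (g (a p)) (g (a q)) (g (a r)) == 0.
have Z12 p q r : Z p q r = Z q p r by rewrite /Z det3_swap12 oppr_eq0.
have Z23 p q r : Z p q r = Z p r q by rewrite /Z det3_swap23 oppr_eq0.
have Zex p q r s : uniq [:: p; q; r; s] -> Z p q r -> Z p q s -> Z p r s.
  rewrite /= !inE !negb_or => /and4P[/and3P[pq _ _] _ _ _] /eqP pqr /eqP pqs; apply/eqP.
  apply: det3_exchange pqr pqs.
  by apply: contraNneq (a_planes _ _ pq) => /det3_cross23_eq0 ->.
have [[i [j [ij ijW]]]|[i [p [q [r [u [Zpq Zpr Zqr]]]]]]] := five_points Z12 Z23 Zex.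
  have [k [xs [ki0 xs5 xsP]]] :=
    generator_choice_coplanar a_planes nprism ij (fun p pi pj => eqP (ijW p pi pj)).
  by exists k, xs; rewrite xs5.
have [k [xs [ki0 xs4 xsP]]] := generator_choice_apart a_planes u Zpq Zpr Zqr.
by exists k, xs; rewrite xs4.
Qed.

End ZonotopeFaces.
End Space3.

Theorem lemma4p4 (R : realType) (P E : 'rV[R]_3 -> Prop) :
  zonotope P -> full_dim P -> ~ prism P ->
  is_edge P E -> card_eq (in_belt P E) 10 ->
  exists M : 'rV[R]_3 -> Prop,
    is_edge P M /\ ~ parallel E M /\ card_ge (in_belt P M) 8.
Proof.
move=> /zonotope_zono[n [g [c Pz]]] Pfull nprism Eedge [f [fbelt [finj _]]].
have [i0 [gi0 [y [Ey Eyg]] Edir]] := edge_generator Pz Eedge.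
have Ebelt : card_ge (in_belt P E) (2 * 5) by exists f.
have [a a_planes] := belt_generators Pz Ey Eyg gi0 Ebelt.
have [k [xs [ki0 xs4 xs_planes]]] := generator_choice Pz nprism a_planes.
have xs2 : (1 < size xs)%N by apply: leq_trans xs4.
have [M [Medge Mbelt [z [Mz Mzk]]]] := belt_card_ge Pz Pfull xs2 xs_planes.
exists M; split => //; split; last by apply: card_geW Mbelt; rewrite (leq_mul2l 2 4).
by move=> EM; case/eqP: ki0; apply: parallel_cross EM Edir Mz Mzk.
Qed.
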